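(* Let $n\ge1$, $C\in\mathcal C_n$ and $A=\Xi^{-1}(C)$. For $i,j\in[n]$ put $m_{ij}=\min(i,j,n-i+1,n-j+1)$. Then for all $i,j,k\in[n]$, $$1-m_{ij}\le \sum_{x=1}^k A_{i,j,x}\le m_{ij},\qquad 1-m_{ij}\le \sum_{x=1}^k A_{i,x,j}\le m_{ij},\qquad 1-m_{ij}\le \sum_{x=1}^k A_{x,i,j}\le m_{ij}.$$
   Context: Let $[n]=\{1,\dots,n\}$, $[0,n]=\{0,\dots,n\}$. A corner-sum hypermatrix of order $n$ is an integer array $C=(C_{i,j,k})_{i,j,k\in[0,n]}$ such that for all $i,j\in[0,n]$: $C_{i,j,0}=C_{i,0,j}=C_{0,i,j}=0$, $C_{i,j,n}=C_{i,n,j}=C_{n,i,j}=ij$, and for all $k\in[n]$ each of $C_{i,j,k}-C_{i,j,k-1}$, $C_{i,k,j}-C_{i,k-1,j}$, $C_{k,i,j}-C_{k-1,i,j}$ is an integer in $\{\max(0,i+j-n),\dots,\min(i,j)\}$; $\mathcal C_n$ is the set of these. $\Xi^{-1}(C)$ is the array indexed by $[n]^3$ with $\Xi^{-1}(C)_{i,j,k}=C_{i,j,k}-C_{i-1,j,k}-C_{i,j-1,k}-C_{i,j,k-1}+C_{i-1,j-1,k}+C_{i-1,j,k-1}+C_{i,j-1,k-1}-C_{i-1,j-1,k-1}$. *)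

From mathcomp Require Import all_boot all_order all_algebra.
Set Implicit Arguments. Unset Strict Implicit. Unset Printing Implicit Defensive.
Import Order.TTheory GRing.Theory Num.Theory.
Local Open Scope ring_scope.

(* A hypermatrix indexed by [0,n]^3 is represented as a function
   nat -> nat -> nat -> int; only its values on [0,n]^3 matter. *)
Definition hyper := nat -> nat -> nat -> int.

(* d lies in {max(0, i+j-n), ..., min(i,j)}; note (i + j - n)%N is truncated,
   so it equals max(0, i+j-n). *)
Definition in_range (n i j : nat) (d : int) : bool :=
  ((i + j - n)%N%:Z <= d) && (d <= (minn i j)%:Z).

Definition is_corner_sum (n : nat) (C : hyper) : Prop :=
  forall i j : nat, (i <= n)%N -> (j <= n)%N ->
    [/\ C i j 0%N = 0, C i 0%N j = 0 & C 0%N i j = 0] /\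
    [/\ C i j n = (i * j)%N%:Z, C i n j = (i * j)%N%:Z & C n i j = (i * j)%N%:Z] /\
        (forall k : nat, (1 <= k <= n)%N ->
          [/\ in_range n i j (C i j k - C i j k.-1),
              in_range n i j (C i k j - C i k.-1 j) &
              in_range n i j (C k i j - C k.-1 i j)]).

(* Xi^{-1}(C), meaningful for i, j, k in [n] (i.e. >= 1). *)
Definition Xi_inv (C : hyper) (i j k : nat) : int :=
  C i j k - C i.-1 j k - C i j.-1 k - C i j k.-1
  + C i.-1 j.-1 k + C i.-1 j k.-1 + C i j.-1 k.-1 - C i.-1 j.-1 k.-1.

Definition mij (n i j : nat) : nat := minn (minn i j) (minn (n - i + 1) (n - j + 1)).

From mathcomp Require Import all_boot all_order all_algebra zify ring.
Import Order.TTheory GRing.Theory Num.Theory.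
Local Open Scope ring_scope.

(* Summing A along a line telescopes to a mixed second difference of C on the
   face at depth k.  That difference is the difference of two consecutive
   one-step increments of C, once along each of the two other directions.  Two
   increments whose ranges differ by one in a parameter j differ by at most
   min(j, n - j + 1) in absolute value (and by at least 1 - that bound), so the
   mixed difference is bounded by the smaller of the two bounds, which is m_ij. *)

Lemma in_rangeC n i j d : in_range n i j d = in_range n j i d.
Proof. by rewrite /in_range addnC minnC. Qed.

Lemma in_range_sub_pred n j k (x y : int) : (1 <= j <= n)%N -> (k <= n)%N ->
  in_range n j k x -> in_range n j.-1 k y ->
  1 - (minn j (n - j + 1))%:Z <= x - y <= (minn j (n - j + 1))%:Z.
Proof. by rewrite /in_range => /andP[? ?] ? /andP[? ?] /andP[? ?]; lia. Qed.

Lemma mijE n i j : mij n i j = minn (minn i (n - i + 1)) (minn j (n - j + 1)).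
Proof. by rewrite /mij minnACA. Qed.

Lemma mixed_difference_bound n i j k (a b c d : int) :
  (1 <= i <= n)%N -> (1 <= j <= n)%N -> (k <= n)%N ->
  in_range n j k (a - b) -> in_range n j.-1 k (c - d) ->
  in_range n i k (a - c) -> in_range n i.-1 k (b - d) ->
  1 - (mij n i j)%:Z <= a - b - c + d <= (mij n i j)%:Z.
Proof.
move=> hi hj hk hab hcd hac hbd.
have := @in_range_sub_pred n j k _ _ hj hk hab hcd.
have := @in_range_sub_pred n i k _ _ hi hk hac hbd.
by rewrite mijE; lia.
Qed.

Lemma telescope_sumr_pred (F : nat -> int) k :
  \sum_(1 <= x < k.+1) (F x - F x.-1) = F k - F 0%N.
Proof. by rewrite big_add1 telescope_sumr. Qed.

Lemma sum_Xi_inv_bound n (C : hyper) :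
  (forall a b, (a <= n)%N -> (b <= n)%N -> C a b 0%N = 0) ->
  (forall a b c, (1 <= a <= n)%N -> (b <= n)%N -> (c <= n)%N ->
     in_range n b c (C a b c - C a.-1 b c)) ->
  (forall a b c, (a <= n)%N -> (1 <= b <= n)%N -> (c <= n)%N ->
     in_range n a c (C a b c - C a b.-1 c)) ->
  forall i j k, (1 <= i <= n)%N -> (1 <= j <= n)%N -> (k <= n)%N ->
  1 - (mij n i j)%:Z <= \sum_(1 <= x < k.+1) Xi_inv C i j x <= (mij n i j)%:Z.
Proof.
move=> C0 step1 step2 i j k hi hj hk.
have iN : (i <= n)%N by case/andP: hi.
have jN : (j <= n)%N by case/andP: hj.
have i'N : (i.-1 <= n)%N by rewrite (leq_trans (leq_pred i)).
have j'N : (j.-1 <= n)%N by rewrite (leq_trans (leq_pred j)).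
pose F x := C i j x - C i.-1 j x - C i j.-1 x + C i.-1 j.-1 x.
have XiE x : Xi_inv C i j x = F x - F x.-1 by rewrite /Xi_inv /F; ring.
under eq_bigr do rewrite XiE.
have F0 : F 0%N = 0 by rewrite /F !C0 // !subr0 addr0.
rewrite telescope_sumr_pred F0 subr0 /F.
by apply: (@mixed_difference_bound n i j k) => //;
  [apply: step1 | apply: step1 | apply: step2 | apply: step2].
Qed.

Lemma is_corner_sum_step n (C : hyper) a b c : is_corner_sum n C ->
  (a <= n)%N -> (b <= n)%N -> (1 <= c <= n)%N ->
  [/\ in_range n a b (C a b c - C a b c.-1),
      in_range n a b (C a c b - C a c.-1 b) &
      in_range n a b (C c a b - C c.-1 a b)].
Proof. by move=> HC ha hb; case: (HC a b ha hb) => _ [_]; apply. Qed.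

Lemma is_corner_sum_face0 n (C : hyper) a b : is_corner_sum n C ->
  (a <= n)%N -> (b <= n)%N ->
  [/\ C a b 0%N = 0, C a 0%N b = 0 & C 0%N a b = 0].
Proof. by move=> HC ha hb; case: (HC a b ha hb) => -[]. Qed.

Theorem mainTheorem17 (n : nat) (C : hyper) :
  (1 <= n)%N -> is_corner_sum n C ->
  forall i j k : nat, (1 <= i <= n)%N -> (1 <= j <= n)%N -> (1 <= k <= n)%N ->
  [/\ 1 - (mij n i j)%:Z <= \sum_(1 <= x < k.+1) Xi_inv C i j x <= (mij n i j)%:Z,
      1 - (mij n i j)%:Z <= \sum_(1 <= x < k.+1) Xi_inv C i x j <= (mij n i j)%:Z &
      1 - (mij n i j)%:Z <= \sum_(1 <= x < k.+1) Xi_inv C x i j <= (mij n i j)%:Z].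
Proof.
move=> _ HC i j k hi hj /andP[_ hk].
have step a b c := @is_corner_sum_step n C a b c HC.
have face0 a b := @is_corner_sum_face0 n C a b HC.
split.
- apply: sum_Xi_inv_bound => // [a b ha hb | a b c ha hb hc | a b c ha hb hc].
  + by case: (face0 a b).
  + by case: (step b c a).
  + by case: (step a c b).
- have XiE x : Xi_inv C i x j = Xi_inv (fun a b c => C a c b) i j x.
    by rewrite /Xi_inv; ring.
  under eq_bigr do rewrite XiE.
  apply: sum_Xi_inv_bound => // [a b ha hb | a b c ha hb hc | a b c ha hb hc].
  + by case: (face0 a b).
  + by case: (step c b a) => // _ _; rewrite in_rangeC.
  + by case: (step a c b).
- have XiE x : Xi_inv C x i j = Xi_inv (fun a b c => C c a b) i j x.
    by rewrite /Xi_inv; ring.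
  under eq_bigr do rewrite XiE.
  apply: sum_Xi_inv_bound => // [a b ha hb | a b c ha hb hc | a b c ha hb hc].
  + by case: (face0 a b).
  + by case: (step c b a) => // _; rewrite in_rangeC.
  + by case: (step c a b) => // + _ _; rewrite in_rangeC.
Qed.
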